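(* Let $E_1,\dots,E_m\in\mathcal L_\Box$ and let $a_1,\dots,a_m$ be pairwise distinct atoms such that every occurrence of each $a_i$ in each $E_j$ lies within the scope of some $\Box$. Then there is a map $\tau$ from atoms to formulas, extended to all formulas by fixing $\bot$ and commuting with $\wedge,\vee,\to,\Box$, such that: (1) $\mathsf{iGL}\vdash\tau(E_i)\leftrightarrow\tau(a_i)$ for every $1\le i\le m$; (2) $\tau(a)=a$ for every atom $a\notin\{a_1,\dots,a_m\}$; (3) for each $i$, every atom occurring in $\tau(a_i)$ occurs in some $E_j$ and is distinct from all of $a_1,\dots,a_m$.
   Context: The modal language $\mathcal L_\Box$ is built from countably many propositional variables, countably many propositional parameters (variables and parameters together are called atoms), the constant $\bot$, the binary connectives $\wedge,\vee,\to$ and the unary modality $\Box$. $\mathsf{iGL}$ is the least set of $\mathcal L_\Box$-formulas closed under modus ponens that contains every instance of the axiom schemata of intuitionistic propositional logic $\mathsf{IPC}$, of $\Box(A\to B)\to(\Box A\to\Box B)$, of $\Box A\to\Box\Box A$, of the Löb schema $\Box(\Box A\to A)\to\Box A$, and of $p\to\Box p$ for every parameter $p$, together with $\Box\varphi$ for every such instance $\varphi$. *)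

From Stdlib Require Import Arith.

Inductive atom : Type :=
| Var : nat -> atom
| Par : nat -> atom.

Inductive form : Type :=
| Atm : atom -> form
| Bot : form
| And : form -> form -> form
| Or  : form -> form -> form
| Imp : form -> form -> form
| Box : form -> form.

Definition Iff (A B : form) : form := And (Imp A B) (Imp B A).

Inductive ipc_axiom : form -> Prop :=
| ax_K  : forall A B, ipc_axiom (Imp A (Imp B A))
| ax_S  : forall A B C,
    ipc_axiom (Imp (Imp A (Imp B C)) (Imp (Imp A B) (Imp A C)))
| ax_and1 : forall A B, ipc_axiom (Imp (And A B) A)
| ax_and2 : forall A B, ipc_axiom (Imp (And A B) B)
| ax_andI : forall A B, ipc_axiom (Imp A (Imp B (And A B)))
| ax_or1 : forall A B, ipc_axiom (Imp A (Or A B))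
| ax_or2 : forall A B, ipc_axiom (Imp B (Or A B))
| ax_orE : forall A B C,
    ipc_axiom (Imp (Imp A C) (Imp (Imp B C) (Imp (Or A B) C)))
| ax_efq : forall A, ipc_axiom (Imp Bot A).

Inductive igl_axiom : form -> Prop :=
| ax_ipc : forall A, ipc_axiom A -> igl_axiom A
| ax_boxK : forall A B, igl_axiom (Imp (Box (Imp A B)) (Imp (Box A) (Box B)))
| ax_box4 : forall A, igl_axiom (Imp (Box A) (Box (Box A)))
| ax_lob : forall A, igl_axiom (Imp (Box (Imp (Box A) A)) (Box A))
| ax_par : forall n, igl_axiom (Imp (Atm (Par n)) (Box (Atm (Par n)))).

Inductive iGL : form -> Prop :=
| igl_ax : forall A, igl_axiom A -> iGL A
| igl_boxax : forall A, igl_axiom A -> iGL (Box A)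
| igl_mp : forall A B, iGL (Imp A B) -> iGL A -> iGL B.

Fixpoint subst (tau : atom -> form) (A : form) : form :=
  match A with
  | Atm a => tau a
  | Bot => Bot
  | And B C => And (subst tau B) (subst tau C)
  | Or B C => Or (subst tau B) (subst tau C)
  | Imp B C => Imp (subst tau B) (subst tau C)
  | Box B => Box (subst tau B)
  end.

Fixpoint occurs (a : atom) (A : form) : Prop :=
  match A with
  | Atm b => b = a
  | Bot => False
  | And B C | Or B C | Imp B C => occurs a B \/ occurs a C
  | Box B => occurs a B
  end.

Fixpoint occurs_unboxed (a : atom) (A : form) : Prop :=
  match A with
  | Atm b => b = a
  | Bot => False
  | And B C | Or B C | Imp B C => occurs_unboxed a B \/ occurs_unboxed a C
  | Box _ => False
  end.

(* If p is modalized in A, then A = B(Box C1, ..., Box Cn) with p only inside the Ci.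
   For a single box, Löb's axiom shows that Box F(⊤) is a fixed point of q <-> Box F(q);
   a fixed point for n boxes is obtained from one for the formula with the last box
   replaced by a fresh atom q, by substituting for q the boxed fixed point of the
   removed subformula.  A system of equations is solved one equation at a time: solve
   the last one for a_m, substitute the solution into the others, and solve those. *)
From Stdlib Require Import Arith Lia List.
Import ListNotations.

Definition atom_eq_dec (a b : atom) : {a = b} + {a <> b}.
Proof. decide equality; apply Nat.eq_dec. Defined.

Definition subst_at (p : atom) (X : form) : atom -> form :=
  fun b => if atom_eq_dec b p then X else Atm b.

Lemma subst_at_eq p X : subst_at p X p = X.
Proof. unfold subst_at; destruct (atom_eq_dec p p); congruence. Qed.

Lemma subst_at_neq p X b : b <> p -> subst_at p X b = Atm b.
Proof. unfold subst_at; destruct (atom_eq_dec b p); congruence. Qed.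

Lemma subst_comp A s t : subst s (subst t A) = subst (fun b => subst s (t b)) A.
Proof. induction A; simpl; f_equal; auto. Qed.

Lemma subst_ext A s t : (forall b, occurs b A -> s b = t b) -> subst s A = subst t A.
Proof. induction A; simpl; intros; f_equal; auto. Qed.

Lemma subst_Atm A : subst Atm A = A.
Proof. induction A; simpl; f_equal; auto. Qed.

Lemma subst_at_notin A q X : ~ occurs q A -> subst (subst_at q X) A = A.
Proof.
  intro Hq; rewrite <- (subst_Atm A) at 2; apply subst_ext.
  intros b Hb; apply subst_at_neq; intros ->; auto.
Qed.

Lemma subst_at_comm_notin C D X p q : ~ occurs q C ->
  subst (subst_at q X) (subst (subst_at p D) C) = subst (subst_at p (subst (subst_at q X) D)) C.
Proof.
  intro Hq; rewrite subst_comp; apply subst_ext; intros b Hb.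
  unfold subst_at at 2 3; destruct (atom_eq_dec b p); [reflexivity|].
  apply subst_at_neq; intros ->; auto.
Qed.

Lemma occurs_subst A s b : occurs b (subst s A) -> exists c, occurs c A /\ occurs b (s c).
Proof.
  revert b; induction A; simpl; intros b H; try tauto.
  1: exists a; auto.
  1-3: destruct H as [H|H]; [destruct (IHA1 _ H) | destruct (IHA2 _ H)]; firstorder.
  destruct (IHA _ H); firstorder.
Qed.

Lemma occurs_unboxed_subst A s b :
  occurs_unboxed b (subst s A) -> exists c, occurs_unboxed c A /\ occurs_unboxed b (s c).
Proof.
  revert b; induction A; simpl; intros b H; try tauto.
  1: exists a; auto.
  all: destruct H as [H|H]; [destruct (IHA1 _ H) | destruct (IHA2 _ H)]; firstorder.
Qed.

Lemma occurs_subst_at A p X b : occurs b (subst (subst_at p X) A) ->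
  (occurs p A /\ occurs b X) \/ (occurs b A /\ b <> p).
Proof.
  intro H; destruct (occurs_subst _ _ _ H) as [c [Hc Hb]].
  unfold subst_at in Hb; destruct (atom_eq_dec c p) as [->|Hcp]; simpl in Hb; subst; auto.
Qed.

Lemma occurs_unboxed_subst_at A p X b : occurs_unboxed b (subst (subst_at p X) A) ->
  occurs_unboxed p A \/ occurs_unboxed b A.
Proof.
  intro H; destruct (occurs_unboxed_subst _ _ _ H) as [c [Hc Hb]].
  unfold subst_at in Hb; destruct (atom_eq_dec c p) as [->|Hcp]; simpl in Hb; subst; auto.
Qed.

Lemma iGL_nec A : iGL A -> iGL (Box A).
Proof.
  induction 1.
  - apply igl_boxax; assumption.
  - eapply igl_mp; [apply igl_ax, ax_box4 | apply igl_boxax; assumption].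
  - eapply igl_mp; [eapply igl_mp; [apply igl_ax, ax_boxK | eassumption] | eassumption].
Qed.

(* The construction substitutes for the atoms a_i, which may be parameters, so it must
   take place among the theorems all of whose substitution instances are theorems. *)
Definition schematic (A : form) : Prop := forall s, iGL (subst s A).

Lemma schematic_mp A B : schematic (Imp A B) -> schematic A -> schematic B.
Proof. intros HAB HA s; exact (igl_mp _ _ (HAB s) (HA s)). Qed.

Lemma schematic_nec A : schematic A -> schematic (Box A).
Proof. intros HA s; apply iGL_nec, HA. Qed.

Lemma schematic_subst t A : schematic A -> schematic (subst t A).
Proof. intros HA s; rewrite subst_comp; apply HA. Qed.

Lemma schematic_iGL A : schematic A -> iGL A.
Proof. intro HA; rewrite <- (subst_Atm A); apply HA. Qed.

Lemma ipc_axiom_subst s A : ipc_axiom A -> ipc_axiom (subst s A).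
Proof. destruct 1; constructor. Qed.

Lemma schematic_ipc A : ipc_axiom A -> schematic A.
Proof. intros HA s; apply igl_ax, ax_ipc, ipc_axiom_subst, HA. Qed.

Lemma schematic_boxK A B : schematic (Imp (Box (Imp A B)) (Imp (Box A) (Box B))).
Proof. intro s; apply igl_ax, ax_boxK. Qed.

Lemma schematic_box4 A : schematic (Imp (Box A) (Box (Box A))).
Proof. intro s; apply igl_ax, ax_box4. Qed.

Lemma schematic_lob A : schematic (Imp (Box (Imp (Box A) A)) (Box A)).
Proof. intro s; apply igl_ax, ax_lob. Qed.

Lemma schematic_imp_refl A : schematic (Imp A A).
Proof.
  apply (schematic_mp (Imp A (Imp A A))); [|apply schematic_ipc, ax_K].
  apply (schematic_mp (Imp A (Imp (Imp A A) A))); apply schematic_ipc; constructor.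
Qed.

Inductive derives (G : list form) : form -> Prop :=
| der_hyp A : In A G -> derives G A
| der_thm A : schematic A -> derives G A
| der_mp A B : derives G (Imp A B) -> derives G A -> derives G B.

Notation "G ⊢ A" := (derives G A) (at level 70).

Ltac hyp := apply der_hyp; simpl; tauto.

Lemma mp_schematic G X Y : schematic (Imp X Y) -> G ⊢ X -> G ⊢ Y.
Proof. intro H; apply der_mp, der_thm, H. Qed.

Lemma mp2_schematic G X Y Z : schematic (Imp X (Imp Y Z)) -> G ⊢ X -> G ⊢ Y -> G ⊢ Z.
Proof. intros H HX; apply der_mp; exact (mp_schematic _ _ _ H HX). Qed.

Lemma deduction G A B : A :: G ⊢ B -> G ⊢ Imp A B.
Proof.
  induction 1 as [B [<-|HB] | B HB | B C _ IH1 _ IH2].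
  - apply der_thm, schematic_imp_refl.
  - apply (mp_schematic _ B); [apply schematic_ipc, ax_K | apply der_hyp, HB].
  - apply (mp_schematic _ B); [apply schematic_ipc, ax_K | apply der_thm, HB].
  - exact (mp2_schematic _ _ _ _ (schematic_ipc _ (ax_S _ _ _)) IH1 IH2).
Qed.

Lemma derives_weaken G G' A : G ⊢ A -> incl G G' -> G' ⊢ A.
Proof.
  induction 1; intros HG.
  - apply der_hyp; auto.
  - apply der_thm; assumption.
  - eapply der_mp; eauto.
Qed.

Lemma derives_nil G A : [] ⊢ A -> G ⊢ A.
Proof. intro H; apply (derives_weaken _ _ _ H); intros x []. Qed.

Lemma derives_schematic A : [] ⊢ A -> schematic A.
Proof. induction 1 as [A []| |]; eauto using schematic_mp. Qed.

Lemma derives_subst t A : [] ⊢ A -> [] ⊢ subst t A.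
Proof. intro H; apply der_thm, schematic_subst, derives_schematic, H. Qed.

Lemma and_intro G A B : G ⊢ A -> G ⊢ B -> G ⊢ And A B.
Proof. apply mp2_schematic, schematic_ipc, ax_andI. Qed.

Lemma and_elim1 G A B : G ⊢ And A B -> G ⊢ A.
Proof. apply mp_schematic, schematic_ipc, ax_and1. Qed.

Lemma and_elim2 G A B : G ⊢ And A B -> G ⊢ B.
Proof. apply mp_schematic, schematic_ipc, ax_and2. Qed.

Lemma or_intro1 G A B : G ⊢ A -> G ⊢ Or A B.
Proof. apply mp_schematic, schematic_ipc, ax_or1. Qed.

Lemma or_intro2 G A B : G ⊢ B -> G ⊢ Or A B.
Proof. apply mp_schematic, schematic_ipc, ax_or2. Qed.

Lemma or_elim G A B C : G ⊢ Or A B -> A :: G ⊢ C -> B :: G ⊢ C -> G ⊢ C.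
Proof.
  intros HAB HA HB; apply (der_mp _ _ _ (mp2_schematic _ _ _ _ (schematic_ipc _ (ax_orE A B C))
                                              (deduction _ _ _ HA) (deduction _ _ _ HB)) HAB).
Qed.

Lemma box_K G A B : G ⊢ Box (Imp A B) -> G ⊢ Box A -> G ⊢ Box B.
Proof. apply mp2_schematic, schematic_boxK. Qed.

Lemma box_4 G A : G ⊢ Box A -> G ⊢ Box (Box A).
Proof. apply mp_schematic, schematic_box4. Qed.

Lemma box_lob G A : G ⊢ Box (Imp (Box A) A) -> G ⊢ Box A.
Proof. apply mp_schematic, schematic_lob. Qed.

Lemma box_nec G A : [] ⊢ A -> G ⊢ Box A.
Proof. intro H; apply der_thm, schematic_nec, derives_schematic, H. Qed.

Lemma box_mp G X Y : [] ⊢ Imp X Y -> G ⊢ Box X -> G ⊢ Box Y.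
Proof. intro H; apply box_K, box_nec, H. Qed.

Lemma box_mp2 G X Y Z : [] ⊢ Imp X (Imp Y Z) -> G ⊢ Box X -> G ⊢ Box Y -> G ⊢ Box Z.
Proof. intros H HX; apply box_K, (box_mp _ _ _ H HX). Qed.

Lemma iff_intro G A B : A :: G ⊢ B -> B :: G ⊢ A -> G ⊢ Iff A B.
Proof. intros; apply and_intro; apply deduction; assumption. Qed.

Lemma iff_mp G A B : G ⊢ Iff A B -> G ⊢ A -> G ⊢ B.
Proof. intro H; apply der_mp, (and_elim1 _ _ _ H). Qed.

Lemma iff_mpr G A B : G ⊢ Iff A B -> G ⊢ B -> G ⊢ A.
Proof. intro H; apply der_mp, (and_elim2 _ _ _ H). Qed.

Lemma iff_refl G A : G ⊢ Iff A A.
Proof. apply iff_intro; hyp. Qed.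

Lemma iff_trans G A B C : G ⊢ Iff A B -> G ⊢ Iff B C -> G ⊢ Iff A C.
Proof.
  intros HAB HBC.
  assert (Hw : forall X, incl G (X :: G)) by (intros X x; simpl; auto).
  apply iff_intro.
  - apply (iff_mp _ B); [exact (derives_weaken _ _ _ HBC (Hw A))|].
    apply (iff_mp _ A); [exact (derives_weaken _ _ _ HAB (Hw A)) | hyp].
  - apply (iff_mpr _ _ B); [exact (derives_weaken _ _ _ HAB (Hw C))|].
    apply (iff_mpr _ _ C); [exact (derives_weaken _ _ _ HBC (Hw C)) | hyp].
Qed.

Lemma box_iff G U V : G ⊢ Box (Iff U V) -> G ⊢ Iff (Box U) (Box V).
Proof.
  intro H.
  assert (Hw : forall X, X :: G ⊢ Box (Iff U V))
    by (intro X; apply (derives_weaken _ _ _ H); intros x; simpl; auto).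
  apply iff_intro; (eapply box_K; [eapply box_mp; [|apply Hw] | hyp]); apply deduction.
  - apply (and_elim1 _ _ (Imp V U)); hyp.
  - apply (and_elim2 _ (Imp U V)); hyp.
Qed.

(* The congruences are stated as closed implications so that they also apply under Box. *)
Lemma and_congr U1 V1 U2 V2 :
  [] ⊢ Imp (Iff U1 V1) (Imp (Iff U2 V2) (Iff (And U1 U2) (And V1 V2))).
Proof.
  apply deduction, deduction, iff_intro; apply and_intro.
  - apply (iff_mp _ U1); [hyp | apply (and_elim1 _ _ U2); hyp].
  - apply (iff_mp _ U2); [hyp | apply (and_elim2 _ U1); hyp].
  - apply (iff_mpr _ _ V1); [hyp | apply (and_elim1 _ _ V2); hyp].
  - apply (iff_mpr _ _ V2); [hyp | apply (and_elim2 _ V1); hyp].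
Qed.

Lemma or_congr U1 V1 U2 V2 :
  [] ⊢ Imp (Iff U1 V1) (Imp (Iff U2 V2) (Iff (Or U1 U2) (Or V1 V2))).
Proof.
  apply deduction, deduction, iff_intro.
  - eapply or_elim; [hyp | apply or_intro1 | apply or_intro2];
      (eapply iff_mp; [|hyp]); hyp.
  - eapply or_elim; [hyp | apply or_intro1 | apply or_intro2];
      (eapply iff_mpr; [|hyp]); hyp.
Qed.

Lemma imp_congr U1 V1 U2 V2 :
  [] ⊢ Imp (Iff U1 V1) (Imp (Iff U2 V2) (Iff (Imp U1 U2) (Imp V1 V2))).
Proof.
  apply deduction, deduction, iff_intro; apply deduction.
  - eapply iff_mp; [hyp|]. eapply der_mp; [hyp|]. eapply iff_mpr; [|hyp]; hyp.
  - eapply iff_mpr; [hyp|]. eapply der_mp; [hyp|]. eapply iff_mp; [|hyp]; hyp.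
Qed.

Lemma box_subst_congr F s s' G : (forall b, G ⊢ Box (Iff (s b) (s' b))) ->
  G ⊢ Box (Iff (subst s F) (subst s' F)).
Proof.
  induction F; simpl; intro H.
  - apply H.
  - apply box_nec, iff_refl.
  - eapply box_mp2; [apply and_congr | apply IHF1 | apply IHF2]; assumption.
  - eapply box_mp2; [apply or_congr | apply IHF1 | apply IHF2]; assumption.
  - eapply box_mp2; [apply imp_congr | apply IHF1 | apply IHF2]; assumption.
  - eapply box_mp; [apply deduction, box_iff; hyp | apply box_4, IHF, H].
Qed.

Lemma subst_congr F s s' : (forall b, [] ⊢ Iff (s b) (s' b)) ->
  [] ⊢ Iff (subst s F) (subst s' F).
Proof.
  induction F; simpl; intro H.
  - apply H.
  - apply iff_refl.
  - eapply der_mp; [eapply der_mp; [apply and_congr | apply IHF1] | apply IHF2]; assumption.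
  - eapply der_mp; [eapply der_mp; [apply or_congr | apply IHF1] | apply IHF2]; assumption.
  - eapply der_mp; [eapply der_mp; [apply imp_congr | apply IHF1] | apply IHF2]; assumption.
  - apply box_iff, box_nec, IHF, H.
Qed.

Definition Top : form := Imp Bot Bot.

Definition box_fixed_point (q : atom) (F : form) : form := Box (subst (subst_at q Top) F).

Lemma box_fixed_point_spec q F :
  [] ⊢ Iff (Box (subst (subst_at q (box_fixed_point q F)) F)) (box_fixed_point q F).
Proof.
  set (K := box_fixed_point q F).
  set (R := Box (subst (subst_at q K) F)).
  (* Once Box K is available, K and Top are interchangeable under Box. *)
  assert (Hswap : forall G, G ⊢ Box K -> G ⊢ Iff R K).
  { intros G HK; apply box_iff, box_subst_congr; intro b.
    unfold subst_at; destruct (atom_eq_dec b q).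
    - eapply box_mp; [|exact HK]. apply deduction, iff_intro; [apply deduction|]; hyp.
    - apply box_nec, iff_refl. }
  assert (Hreflect : [] ⊢ Imp (Box (Imp R K)) (Imp R K)).
  { apply deduction, deduction, (iff_mp _ R); [apply Hswap | hyp].
    eapply box_K; [hyp | apply box_4; hyp]. }
  assert (HRK : [] ⊢ Imp R K) by exact (der_mp _ _ _ Hreflect (box_lob _ _ (box_nec _ _ Hreflect))).
  apply iff_intro.
  - eapply der_mp; [apply derives_nil, HRK | hyp].
  - apply (iff_mpr _ _ K); [apply Hswap, box_4 | ]; hyp.
Qed.

Fixpoint outer_boxes (A : form) : nat :=
  match A with
  | Atm _ | Bot => 0
  | Box _ => 1
  | And X Y | Or X Y | Imp X Y => outer_boxes X + outer_boxes Y
  end.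

Definition atom_index (b : atom) : nat := match b with Var n | Par n => n end.

Fixpoint max_index (A : form) : nat :=
  match A with
  | Atm b => atom_index b
  | Bot => 0
  | Box X => max_index X
  | And X Y | Or X Y | Imp X Y => Nat.max (max_index X) (max_index Y)
  end.

Lemma max_index_occurs A b : occurs b A -> atom_index b <= max_index A.
Proof.
  induction A; simpl; intro H; [subst; lia | contradiction | | | | auto].
  all: destruct H as [H|H]; [specialize (IHA1 H) | specialize (IHA2 H)]; lia.
Qed.

Definition fresh_atom (A : form) (p : atom) : atom := Var (S (Nat.max (max_index A) (atom_index p))).

Lemma fresh_atom_notin A p : ~ occurs (fresh_atom A p) A.
Proof. intro H; apply max_index_occurs in H; simpl in H; lia. Qed.

Lemma fresh_atom_neq A p : fresh_atom A p <> p.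
Proof. intro H; apply (f_equal atom_index) in H; simpl in H; lia. Qed.

Lemma outer_box_split A q : ~ occurs q A ->
  (forall b, occurs b A -> occurs_unboxed b A) \/
  exists B C, A = subst (subst_at q (Box C)) B /\ outer_boxes B < outer_boxes A /\
    (forall b, occurs b B -> occurs b A \/ b = q) /\ (forall b, occurs b C -> occurs b A) /\
    (forall b, occurs_unboxed b B -> occurs_unboxed b A \/ b = q).
Proof.
  induction A as [c| |X IHX Y IHY|X IHX Y IHY|X IHX Y IHY|C _]; intro Hq.
  1-2: left; simpl; tauto.
  4: right; exists (Atm q), C; simpl; rewrite subst_at_eq; repeat split; intros; subst; auto.
  all: simpl in Hq; match goal with |- context [?con ?X ?Y = _] =>
    destruct (IHX ltac:(tauto)) as [HX | (B & C & HXB & HB)];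
    [destruct (IHY ltac:(tauto)) as [HY | (B & C & HYB & HB)];
      [left; intros b [Hb|Hb]; [left; apply HX | right; apply HY]; exact Hb
      | right; exists (con X B), C]
    | right; exists (con B Y), C] end.
  all: simpl; split; [f_equal; solve [assumption | symmetry; apply subst_at_notin; tauto] |].
  all: destruct HB as (Hlt & HBocc & HCocc & HBunb); split; [lia|].
  all: split; [intros b [Hb|Hb]; try destruct (HBocc b Hb); tauto|].
  all: split; [intros b Hb; specialize (HCocc b Hb); tauto|].
  all: intros b [Hb|Hb]; try destruct (HBunb b Hb); tauto.
Qed.

Lemma fixed_point_outer_box B C D p q : q <> p -> ~ occurs q C ->
  [] ⊢ Iff (subst (subst_at p D) B) D ->
  let K := box_fixed_point q (subst (subst_at p D) C) in
  [] ⊢ Iff (subst (subst_at p (subst (subst_at q K) D)) (subst (subst_at q (Box C)) B))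
            (subst (subst_at q K) D).
Proof.
  intros Hqp HqC HD K.
  assert (HK := box_fixed_point_spec q (subst (subst_at p D) C)); fold K in HK.
  rewrite subst_at_comm_notin in HK by exact HqC.
  apply (iff_trans _ _ (subst (subst_at q K) (subst (subst_at p D) B)));
    [| exact (derives_subst _ _ HD)].
  rewrite !subst_comp; apply subst_congr; intro b.
  destruct (atom_eq_dec b q) as [->|Hbq].
  - rewrite subst_at_eq, subst_at_neq by exact Hqp; simpl; rewrite subst_at_eq; exact HK.
  - rewrite (subst_at_neq q _ b Hbq); simpl.
    destruct (atom_eq_dec b p) as [->|Hbp]; [rewrite !subst_at_eq; apply iff_refl|].
    rewrite !subst_at_neq by assumption; simpl; rewrite subst_at_neq by exact Hbq; apply iff_refl.
Qed.

Lemma fixed_point A p : ~ occurs_unboxed p A ->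
  exists D, [] ⊢ Iff (subst (subst_at p D) A) D /\ (forall b, occurs b D -> occurs b A /\ b <> p).
Proof.
  induction A as [A IH] using (well_founded_induction (Wf_nat.well_founded_ltof _ outer_boxes)).
  intro Hp.
  assert (Hq := fresh_atom_notin A p); assert (Hqp := fresh_atom_neq A p).
  set (q := fresh_atom A p) in *.
  destruct (outer_box_split A q Hq) as [Hunb | (B & C & HA & Hlt & HB & HC & HBunb)].
  - assert (Hnp : ~ occurs p A) by (intro H; apply Hp, Hunb, H).
    exists A; rewrite subst_at_notin by exact Hnp.
    split; [apply iff_refl | intros b Hb; split; [exact Hb | intros ->; auto]].
  - destruct (IH B Hlt) as [D [HD HDocc]].
    { intro H; destruct (HBunb p H); auto. }
    assert (HqC : ~ occurs q C) by auto.
    exists (subst (subst_at q (box_fixed_point q (subst (subst_at p D) C))) D); split.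
    + rewrite HA; exact (fixed_point_outer_box B C D p q Hqp HqC HD).
    + assert (HDA : forall b, occurs b D -> b <> q -> occurs b A /\ b <> p)
        by (intros b HbD Hbq; destruct (HDocc b HbD) as [HbB Hbp];
            destruct (HB b HbB); [auto | congruence]).
      intros b Hb; apply occurs_subst_at in Hb as [[_ Hb]|[HbD Hbq]]; [|auto].
      apply occurs_subst_at in Hb as [[_ [[]|[]]]|[Hb Hbq]].
      apply occurs_subst_at in Hb as [[_ HbD]|[HbC Hbp]]; auto.
Qed.

Lemma not_in_range_S (a : nat -> atom) m b :
  b <> a m -> (forall k, k < m -> b <> a k) -> forall k, k < S m -> b <> a k.
Proof. intros Hm Hne k Hk; destruct (Nat.eq_dec k m) as [->|]; [exact Hm | apply Hne; lia]. Qed.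

Lemma atom_in_range_dec (a : nat -> atom) m c :
  (exists k, k < m /\ c = a k) \/ (forall k, k < m -> c <> a k).
Proof.
  induction m as [|m [[k [Hk ->]]|Hne]]; [right; lia | left; exists k; split; [lia | reflexivity]|].
  destruct (atom_eq_dec c (a m)) as [->|Hcm]; [left; exists m; split; [lia | reflexivity]|].
  right; exact (not_in_range_S a m c Hcm Hne).
Qed.

Definition solves (m : nat) (E : nat -> form) (a : nat -> atom) (tau : atom -> form) : Prop :=
  (forall i, i < m -> iGL (Iff (subst tau (E i)) (tau (a i)))) /\
  (forall b, (forall i, i < m -> b <> a i) -> tau b = Atm b) /\
  (forall i b, i < m -> occurs b (tau (a i)) ->
     (exists j, j < m /\ occurs b (E j)) /\ (forall k, k < m -> b <> a k)).

Section SolveLast.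

Variables (m : nat) (E : nat -> form) (a : nat -> atom) (D : form) (t : atom -> form).
Hypothesis Hdistinct : forall i j, i < S m -> j < S m -> a i = a j -> i = j.
Hypothesis HD : [] ⊢ Iff (subst (subst_at (a m) D) (E m)) D.
Hypothesis HDocc : forall b, occurs b D -> occurs b (E m) /\ b <> a m.
Hypothesis Ht : solves m (fun j => subst (subst_at (a m) D) (E j)) a t.

Lemma a_neq_last i : i < m -> a i <> a m.
Proof. intros Hi H; apply Hdistinct in H; lia. Qed.

Lemma occurs_t_a i b : i < m -> occurs b (t (a i)) ->
  (exists j, j < S m /\ occurs b (E j)) /\ (forall k, k < S m -> b <> a k).
Proof.
  intros Hi Hb; destruct Ht as [_ [_ T3]].
  destruct (T3 i b Hi Hb) as [[j [Hj Hbj]] Hne].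
  apply occurs_subst_at in Hbj as [[_ HbD]|[HbE Hbm]]; [destruct (HDocc b HbD) as [HbE Hbm]|];
    (split; [eexists; split; [|exact HbE]; lia | exact (not_in_range_S a m b Hbm Hne)]).
Qed.

Lemma occurs_t_D b : occurs b (subst t D) ->
  (exists j, j < S m /\ occurs b (E j)) /\ (forall k, k < S m -> b <> a k).
Proof.
  intro Hb; destruct (occurs_subst _ _ _ Hb) as [c [HcD Hbc]].
  destruct (HDocc c HcD) as [HcE Hcm].
  destruct (atom_in_range_dec a m c) as [[k [Hk ->]]|Hne]; [exact (occurs_t_a k b Hk Hbc)|].
  destruct Ht as [_ [T2 _]]; rewrite (T2 c Hne) in Hbc; simpl in Hbc; subst c.
  split; [exists m; split; [lia | exact HcE] | exact (not_in_range_S a m b Hcm Hne)].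
Qed.

Lemma solves_S : solves (S m) E a (fun b => subst t (subst_at (a m) D b)).
Proof.
  assert (Hta : forall i, i < m -> subst t (subst_at (a m) D (a i)) = t (a i))
    by (intros i Hi; rewrite subst_at_neq by exact (a_neq_last i Hi); reflexivity).
  destruct Ht as [T1 [T2 _]].
  split; [|split].
  - intros i Hi; rewrite <- subst_comp.
    destruct (Nat.eq_dec i m) as [->|Hne]; [|rewrite Hta by lia; apply T1; lia].
    rewrite subst_at_eq; exact (schematic_iGL _ (derives_schematic _ (derives_subst t _ HD))).
  - intros b Hb; rewrite subst_at_neq by (apply Hb; lia); apply T2; intros i Hi; apply Hb; lia.
  - intros i b Hi Hb; destruct (Nat.eq_dec i m) as [->|Hne].
    + rewrite subst_at_eq in Hb; exact (occurs_t_D b Hb).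
    + rewrite Hta in Hb by lia; apply (occurs_t_a i); [lia | exact Hb].
Qed.

End SolveLast.

Theorem mainTheorem15 (m : nat) (E : nat -> form) (a : nat -> atom)
  (Hdistinct : forall i j, i < m -> j < m -> a i = a j -> i = j)
  (Hboxed : forall i j, i < m -> j < m -> ~ occurs_unboxed (a i) (E j)) :
  exists tau : atom -> form,
    (forall i, i < m -> iGL (Iff (subst tau (E i)) (tau (a i)))) /\
    (forall b, (forall i, i < m -> b <> a i) -> tau b = Atm b) /\
    (forall i b, i < m -> occurs b (tau (a i)) ->
       (exists j, j < m /\ occurs b (E j)) /\ (forall k, k < m -> b <> a k)).
Proof.
  revert E Hdistinct Hboxed; induction m as [|m IH]; intros E Hdistinct Hboxed.
  { exists Atm; split; [|split]; intros; solve [lia | reflexivity]. }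
  destruct (fixed_point (E m) (a m) (Hboxed m m (Nat.lt_succ_diag_r m) (Nat.lt_succ_diag_r m)))
    as [D [HD HDocc]].
  destruct (IH (fun j => subst (subst_at (a m) D) (E j))) as [t Ht].
  - intros i j Hi Hj; apply Hdistinct; lia.
  - intros i j Hi Hj H; apply occurs_unboxed_subst_at in H as [H|H];
      [apply (Hboxed m j) | apply (Hboxed i j)]; auto.
  - exists (fun b => subst t (subst_at (a m) D b)).
    exact (solves_S m E a D t Hdistinct HD HDocc Ht).
Qed.
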